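(* Let $a,b,c,d,e,f\in\mathbb{C}$ with $|a|=|b|=|c|=|d|=|e|=|f|=1$, and set \[\mathcal{H}(a,b,c,d,e,f):=(1+a+b+e)(1+\overline{c}+\overline{d}+\overline{f})(1+c\overline{a}+d\overline{b}+f\overline{e}).\] Then there exist complex numbers $s_1,s_2,s_3,s_4$ of modulus $1$ such that the three vectors $(1,1,1,1,1,1)$, $(1,a,b,e,s_1,s_2)$ and $(1,c,d,f,s_3,s_4)$ of $\mathbb{C}^6$ are pairwise orthogonal (with respect to the standard inner product $\langle u,v\rangle=\sum_k u_k\overline{v_k}$) if and only if both \[\mathcal{H}(a,b,c,d,e,f)=4-|1+a+b+e|^2-|1+c+d+f|^2-|1+c\overline{a}+d\overline{b}+f\overline{e}|^2\] and \[|1+a+b+e|\leq 2\] hold. *)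

(* Complex numbers are modelled by an arbitrary
   numClosedFieldType C (algebraically closed field with conjugation and
   norm, e.g. algC); the statement is proved for every such C. *)
From HB Require Import structures.
From mathcomp Require Import all_boot all_order all_algebra.
Set Implicit Arguments. Unset Strict Implicit. Unset Printing Implicit Defensive.
Import Order.TTheory GRing.Theory Num.Theory.
Local Open Scope ring_scope.

Definition cdot (C : numClosedFieldType) (n : nat) (u v : 'rV[C]_n) : C :=
  \sum_(k < n) u 0 k * (v 0 k)^*.

Definition vec6 (C : numClosedFieldType) (x0 x1 x2 x3 x4 x5 : C) : 'rV[C]_6 :=
  \row_(k < 6) nth 0 [:: x0; x1; x2; x3; x4; x5] k.

Definition calH (C : numClosedFieldType) (a b c d e f : C) : C :=
  (1 + a + b + e) * (1 + c^* + d^* + f^*) * (1 + c * a^* + d * b^* + f * e^*).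

From HB Require Import structures.
From mathcomp Require Import all_boot all_order all_algebra.
From mathcomp Require Import ring.
Import Order.TTheory GRing.Theory Num.Theory.
Local Open Scope ring_scope.

(* Put p = 1+a+b+e, q = 1+c+d+f, r = 1 + c a^* + d b^* + f e^*.
   After conjugation the three orthogonality relations say exactly that
   s1 + s2 = -p, s3 + s4 = -q and s1^* s3 + s2^* s4 = -r, so the theorem is a
   statement about when a triple (P, Q, R) admits such a "unit splitting".
   For unimodular s_i one computes P Q^* R = |P|^2 + |Q|^2 + |R|^2 - 4
   ("(P, Q, R) is balanced"), and |P| <= 2 by the triangle inequality; for
   P = -p this is the condition on calH.  Conversely, for a balanced triple
   with |P| <= 2 we choose unimodular s1, s2 = P - s1 (two points of the unit
   circle at distance 1 from P), and then solve the 2x2 linear system for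
   s3, s4; balancedness makes the solutions unimodular, provided s1 <> s2
   (possible when |P| < 2).  In the degenerate case |P| = 2 balancedness
   forces R = P^* Q / 2, and one needs |Q| <= 2; for the specific p, q, r
   built from a,...,f this bound follows from a Cauchy-Schwarz estimate.  Throughout, |x|^2 is handled in the ring-friendly form x * x^*. *)

Section UnitSplitting.
Context {C : numClosedFieldType}.
Implicit Types P Q R W K g x : C.

Lemma normC1 x : `|x| = 1 <-> x * x^* = 1.
Proof.
split=> H; first by rewrite -normCK H expr1n.
by apply/eqP; rewrite -sqrp_eq1 ?normr_ge0 // normCK H.
Qed.

Lemma unit_neq0 {x} : x * x^* = 1 -> x != 0.
Proof. by apply: contra_eq_neq => ->; rewrite mul0r eq_sym oner_eq0. Qed.

Lemma conjC_unit {x} : x * x^* = 1 -> x^* = x^-1.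
Proof.
by move=> H; rewrite -[x^*]mul1r -(mulVf (unit_neq0 H)) -mulrA H mulr1.
Qed.

Definition unit_split P Q R := exists s1 s2 s3 s4,
  [/\ s1 * s1^* = 1, s2 * s2^* = 1, s3 * s3^* = 1 & s4 * s4^* = 1] /\
  [/\ s1 + s2 = P, s3 + s4 = Q & s1^* * s3 + s2^* * s4 = R].

Definition balanced P Q R := P * Q^* * R = P * P^* + Q * Q^* + R * R^* - 4.

Lemma balanced_conj {P Q R} :
  balanced P Q R -> P^* * Q * R^* = P * P^* + Q * Q^* + R * R^* - 4.
Proof.
move=> /(congr1 Num.conj).
by rewrite !rmorphB !rmorphD !rmorphM /= !conjCK ?rmorph1 ?rmorph_nat => ->; ring.
Qed.

(* Expand using s_i^* = s_i^-1; the identity is then a rational one. *)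
Lemma unit_split_balanced P Q R : unit_split P Q R -> balanced P Q R.
Proof.
move=> [s1 [s2 [s3 [s4 [[h1 h2 h3 h4] [<- <- <-]]]]]].
rewrite /balanced !rmorphD !rmorphM /= !conjCK.
rewrite (conjC_unit h1) (conjC_unit h2) (conjC_unit h3) (conjC_unit h4).
by field; rewrite !unit_neq0.
Qed.

Lemma sqr_norm_le2 x : (x * x^* <= 4) = (`|x| <= 2).
Proof.
by rewrite -normCK (_ : 4 = 2 ^+ 2) ?ler_sqr ?nnegrE ?normr_ge0 ?ler0n //; ring.
Qed.

Lemma unit_split_bound P Q R : unit_split P Q R -> P * P^* <= 4.
Proof.
move=> [s1 [s2 [s3 [s4 [[h1 h2 _ _] [<- _ _]]]]]].
rewrite sqr_norm_le2 (le_trans (ler_normD _ _)) //.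
by rewrite (proj2 (normC1 _) h1) (proj2 (normC1 _) h2).
Qed.

Lemma balanced_degenerate {P Q R} :
  balanced P Q R -> P * P^* = 4 -> R = P^* * Q / 2.
Proof.
move=> h1 hP; have h2 := balanced_conj h1; rewrite /balanced in h1.
set K := P * P^* + Q * Q^* + R * R^* - 4 in h1 h2.
have E : (P^* * Q / 2 - R) * (P^* * Q / 2 - R)^* =
   (Q * Q^* / 4 - 1) * (P * P^* - 4) - (P * Q^* * R - K) / 2
   - (P^* * Q * R^* - K) / 2.
  by rewrite rmorphB !rmorphM fmorphV /= conjCK rmorph_nat /K; field.
move: E; rewrite h1 h2 hP !subrr !(mulr0, mul0r, subr0, sub0r, oppr0) => /eqP.
by rewrite mulf_eq0 conjC_eq0 orbb subr_eq0 => /eqP ->.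
Qed.

Lemma unit_diff P g :
  g * g^* = 1 -> (P - g) * (P - g)^* = 1 <-> P^* * g + P * g^* = P * P^*.
Proof.
move=> hg; have E : (P - g) * (P - g)^* = P * P^* - (P^* * g + P * g^*) + g * g^*.
  by rewrite rmorphB /=; ring.
rewrite E hg; split=> [H|->]; last by ring.
have -> : P^* * g + P * g^* = P * P^* + 1 - (P * P^* - (P^* * g + P * g^*) + 1).
  by ring.
by rewrite H; ring.
Qed.

Lemma rotate_imaginary W : exists g, g * g^* = 1 /\ W * g + W^* * g^* = 0.
Proof.
have [->|Wn0] := eqVneq W 0; first by exists 1; rewrite rmorph0 rmorph1; split; ring.
set n := `|W|; have nn0 : n != 0 by rewrite normr_eq0.
have nc : n^* = n by rewrite conj_Creal // normr_real.
have n2 : n ^+ 2 = W * W^* by rewrite normCK.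
exists ('i * W^* / n); rewrite !rmorphM fmorphV /= conjCK conjCi nc; split.
  have -> : 'i * W^* / n * (- 'i * W / n) = - ('i ^+ 2) * (W * W^*) / n ^+ 2 by field.
  by rewrite sqrCi -n2 opprK mul1r divff // expf_neq0.
by field.
Qed.

(* For 0 < |P| <= 2 the points P (1/2 + i t), t real, form the perpendicular
   bisector of [0, P]; one of them is unimodular, with t <> 0 unless |P| = 2. *)
Lemma bisector_unit {P} : P != 0 -> P * P^* <= 4 ->
  exists2 t, t^* = t &
    (P / 2 + 'i * t * P) * (P / 2 + 'i * t * P)^* = 1 /\
    (P * P^* != 4 -> t != 0).
Proof.
move=> Pn0 hP; set x := (4 - P * P^*) / (4 * (P * P^*)).
have PP0 : P * P^* != 0 by rewrite mulf_neq0 ?conjC_eq0.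
have x0 : 0 <= x.
  by rewrite /x divr_ge0 ?subr_ge0 // mulr_ge0 ?ler0n // -normCK exprn_ge0.
have tc : (sqrtC x)^* = sqrtC x by rewrite conj_Creal // sqrtC_real.
exists (sqrtC x) => //; split.
  rewrite rmorphD !rmorphM fmorphV /= conjCi tc rmorph_nat.
  have -> : (P / 2 + 'i * sqrtC x * P) * (P^* / 2 + - 'i * sqrtC x * P^*) =
     P * P^* / 4 - 'i ^+ 2 * sqrtC x ^+ 2 * (P * P^*) by field.
  by rewrite sqrCi sqrtCK /x; field; rewrite conjC_eq0 Pn0.
apply: contra => /eqP /(congr1 (fun y => y ^+ 2)); rewrite sqrtCK expr0n /=.
move=> /eqP; rewrite /x mulf_eq0 invr_eq0 (negPf (mulf_neq0 _ PP0)) ?pnatr_eq0 //.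
by rewrite orbF subr_eq0 eq_sym.
Qed.

(* For P <> 0 take g on the bisector; then, for
   any W with W P = K real, also 2 Re(W g) = K.  For P = 0 the last
   condition is met by rotating W onto the imaginary axis. *)
Lemma unit_halves {P W K} :
  P * P^* <= 4 -> W * P = K -> K^* = K ->
  exists g, [/\ g * g^* = 1, (P - g) * (P - g)^* = 1,
     W * g + W^* * g^* = K & (P * P^* != 4 -> 2 * g != P)].
Proof.
move=> hP hWK hK.
have hWK' : W^* * P^* = K by rewrite -rmorphM /= hWK hK.
have [P0|Pn0] := eqVneq P 0.
  have [g [g1 g2]] := rotate_imaginary W.
  exists g; split=> //; first by apply/unit_diff; rewrite // P0 rmorph0; ring.
    by rewrite -hWK P0 mulr0.
  by move=> _; rewrite P0 mulf_neq0 ?pnatr_eq0 ?unit_neq0.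
have [t tc [g1 t0]] := bisector_unit Pn0 hP.
have gc : (P / 2 + 'i * t * P)^* = P^* / 2 - 'i * t * P^*.
  by rewrite rmorphD !rmorphM fmorphV /= conjCi tc rmorph_nat; ring.
exists (P / 2 + 'i * t * P); split=> //.
- by apply/unit_diff; rewrite // gc; field.
- rewrite gc; have -> : W * (P / 2 + 'i * t * P) + W^* * (P^* / 2 - 'i * t * P^*) =
     (W * P) / 2 + (W^* * P^*) / 2 + 'i * t * (W * P - W^* * P^*) by field.
  by rewrite hWK hWK' subrr mulr0 addr0; field.
- move=> /t0 tn0; rewrite -subr_eq0.
  have -> : 2 * (P / 2 + 'i * t * P) - P = 2 * 'i * t * P by field.
  by rewrite !mulf_neq0 ?pnatr_eq0 ?neq0Ci.
Qed.

Lemma unit_div (N D : C) : D != 0 -> N * N^* = D * D^* -> (N / D) * (N / D)^* = 1.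
Proof.
by move=> hD HN; rewrite fmorph_div mulf_div HN divff // mulf_neq0 ?conjC_eq0.
Qed.

(* Once distinct unimodular s1, s2 with s1 + s2 = P are fixed, the system
   s3 + s4 = Q, s1^* s3 + s2^* s4 = R has a unique solution; balancedness,
   together with Re(Q^* R s1) = K / 2, makes that solution unimodular. *)
Lemma solve_second_pair s1 s2 Q R :
  s1 * s1^* = 1 -> s2 * s2^* = 1 -> s1 != s2 -> balanced (s1 + s2) Q R ->
  Q^* * R * s1 + Q * R^* * s1^* =
    (s1 + s2) * (s1 + s2)^* + Q * Q^* + R * R^* - 4 ->
  unit_split (s1 + s2) Q R.
Proof.
move=> h1 h2 s12 hB hRe; have hB' := balanced_conj hB; rewrite /balanced in hB.
set P := s1 + s2 in hB hB' hRe *.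
set K := P * P^* + Q * Q^* + R * R^* - 4 in hB hB' hRe.
set D := s2^* - s1^*.
have hD : D != 0 by rewrite /D subr_eq0 (inj_eq (can_inj conjCK)) eq_sym.
set N3 := Q * s2^* - R; set N4 := R - s1^* * Q.
have u3 : N3 * N3^* = D * D^*.
  apply/eqP; rewrite -subr_eq0; apply/eqP.
  have -> : N3 * N3^* - D * D^* = Q * Q^* * (s2 * s2^* - 1) - (P * Q^* * R - K)
      - (P^* * Q * R^* - K) + (Q^* * R * s1 + Q * R^* * s1^* - K)
      - 2 * (s1 * s1^* - 1) - 2 * (s2 * s2^* - 1).
    by rewrite /N3 /D /K /P !rmorphB !rmorphD !rmorphM /= ?conjCK; ring.
  by rewrite h1 h2 hB hB' hRe !subrr; ring.
have u4 : N4 * N4^* = D * D^*.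
  apply/eqP; rewrite -subr_eq0; apply/eqP.
  have -> : N4 * N4^* - D * D^* = - (Q^* * R * s1 + Q * R^* * s1^* - K)
      + (Q * Q^* - 2) * (s1 * s1^* - 1) - 2 * (s2 * s2^* - 1).
    by rewrite /N4 /D /K /P !rmorphB !rmorphD !rmorphM /= ?conjCK; ring.
  by rewrite h1 h2 hRe !subrr; ring.
exists s1, s2, (N3 / D), (N4 / D); split; split=> //; try exact: unit_div.
- by rewrite -mulrDl (_ : N3 + N4 = Q * D) ?mulfK // /N3 /N4 /D; ring.
- rewrite !mulrA -mulrDl (_ : s1^* * N3 + s2^* * N4 = R * D) ?mulfK //.
  by rewrite /N3 /N4 /D; ring.
Qed.

(* On the boundary circle |P| = 2 take s1 = s2 = P / 2: balancedness gives
   R = s1^* Q, so any unimodular s3, s4 = Q - s3 will do; these exist since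
   |Q| <= 2. *)
Lemma degenerate_split {P Q R} :
  P * P^* = 4 -> Q * Q^* <= 4 -> balanced P Q R -> unit_split P Q R.
Proof.
move=> hP hQ hB; have hR := balanced_degenerate hB hP.
have [g [g1 g2 _ _]] := @unit_halves Q 0 0 hQ (mul0r _) (rmorph0 _).
have half : (P / 2) * (P / 2)^* = 1.
  rewrite !rmorphM fmorphV /= rmorph_nat (_ : _ * _ = (P * P^*) / 4); last by field.
  by rewrite hP divff // pnatr_eq0.
exists (P / 2), (P / 2), g, (Q - g); split; split=> //.
- by field.
- by ring.
- by rewrite hR !rmorphM fmorphV /= rmorph_nat; field.
Qed.

Lemma balanced_split {P Q R} :
  balanced P Q R -> P * P^* <= 4 -> (P * P^* = 4 -> Q * Q^* <= 4) ->
  unit_split P Q R.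
Proof.
move=> hB hP hQ.
have [P4|P4] := eqVneq (P * P^*) 4; first exact: degenerate_split (hQ P4) hB.
have hK : (P * Q^* * R)^* = P * Q^* * R.
  rewrite [in RHS]hB -(balanced_conj hB) !rmorphM /= conjCK; ring.
have hWK : (Q^* * R) * P = P * Q^* * R by ring.
have [g [g1 g2 g3 g4]] := unit_halves hP hWK hK.
suff : unit_split (g + (P - g)) Q R by rewrite addrC subrK.
apply: solve_second_pair; rewrite ?(addrC g (P - g)) ?subrK //.
- apply: contra (g4 P4) => /eqP E; apply/eqP.
  by rewrite -[P](subrK g) -E; ring.
- by move: g3; rewrite rmorphM /= conjCK => ->; exact: hB.
Qed.

(* Cauchy-Schwarz inequality in C^4, via Lagrange's identity. *)
Lemma cauchy_schwarz4 (v1 v2 v3 v4 y1 y2 y3 y4 : C) :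
  (v1 * y1 + v2 * y2 + v3 * y3 + v4 * y4) *
    (v1 * y1 + v2 * y2 + v3 * y3 + v4 * y4)^*
  <= (v1 * v1^* + v2 * v2^* + v3 * v3^* + v4 * v4^*) *
     (y1 * y1^* + y2 * y2^* + y3 * y3^* + y4 * y4^*).
Proof.
set z := v1 * y1 + v2 * y2 + v3 * y3 + v4 * y4; rewrite -subr_ge0.
have -> : (v1 * v1^* + v2 * v2^* + v3 * v3^* + v4 * v4^*) *
          (y1 * y1^* + y2 * y2^* + y3 * y3^* + y4 * y4^*) - z * z^* =
   (v1 * y2^* - v2 * y1^*) * (v1 * y2^* - v2 * y1^*)^* +
   (v1 * y3^* - v3 * y1^*) * (v1 * y3^* - v3 * y1^*)^* +
   (v1 * y4^* - v4 * y1^*) * (v1 * y4^* - v4 * y1^*)^* +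
   (v2 * y3^* - v3 * y2^*) * (v2 * y3^* - v3 * y2^*)^* +
   (v2 * y4^* - v4 * y2^*) * (v2 * y4^* - v4 * y2^*)^* +
   (v3 * y4^* - v4 * y3^*) * (v3 * y4^* - v4 * y3^*)^*.
  by rewrite /z !rmorphB !rmorphD !rmorphM /= !conjCK; ring.
by rewrite -!normCK !addr_ge0 // exprn_ge0.
Qed.

(* The boundary case of the theorem: if |p| = 2 and r = -p^* q / 2, then
   |q| <= 2.  Write q = sum_i v_i y_i with v = (1, c, d, f) and
   y_i = 1/2 - p u_i^* / 4, u = (1, a, b, e); then |y| = 1 and |v| = 2. *)
Lemma degenerate_bound (a b c d e f : C) :
  a * a^* = 1 -> b * b^* = 1 -> c * c^* = 1 -> d * d^* = 1 -> e * e^* = 1 ->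
  f * f^* = 1 -> (1 + a + b + e) * (1 + a + b + e)^* = 4 ->
  1 + c * a^* + d * b^* + f * e^* = - ((1 + a + b + e)^* * (1 + c + d + f) / 2) ->
  (1 + c + d + f) * (1 + c + d + f)^* <= 4.
Proof.
move=> ua ub uc ud ue uf hp hr.
set p := 1 + a + b + e in hp hr.
have := cauchy_schwarz4 1 c d f (1/2 - p / 4) (1/2 - p * a^* / 4)
   (1/2 - p * b^* / 4) (1/2 - p * e^* / 4).
have -> : 1 * (1 / 2 - p / 4) + c * (1 / 2 - p * a^* / 4) +
    d * (1 / 2 - p * b^* / 4) + f * (1 / 2 - p * e^* / 4) = 1 + c + d + f.
  apply/eqP; rewrite -subr_eq0; apply/eqP.
  have -> : 1 * (1 / 2 - p / 4) + c * (1 / 2 - p * a^* / 4) +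
      d * (1 / 2 - p * b^* / 4) + f * (1 / 2 - p * e^* / 4) - (1 + c + d + f) =
    - (p / 4) * ((1 + c * a^* + d * b^* + f * e^*) + (p^* * (1 + c + d + f) / 2))
    + ((1 + c + d + f) / 8) * (p * p^* - 4) by field.
  by rewrite hr hp addNr subrr !mulr0 addr0.
have -> : (1 / 2 - p / 4) * (1 / 2 - p / 4)^* +
    (1 / 2 - p * a^* / 4) * (1 / 2 - p * a^* / 4)^* +
    (1 / 2 - p * b^* / 4) * (1 / 2 - p * b^* / 4)^* +
    (1 / 2 - p * e^* / 4) * (1 / 2 - p * e^* / 4)^*
  = 1 + p * p^* / 16 * ((a * a^* - 1) + (b * b^* - 1) + (e * e^* - 1)).
  by rewrite /p !rmorphB !rmorphM !fmorphV !rmorphD /= ?conjCK ?rmorph1 ?rmorph_nat; field.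
rewrite rmorph1 uc ud uf ua ub ue !subrr !addr0 mulr0 addr0 mulr1 mul1r.
by rewrite (_ : 1 + 1 + 1 + 1 = 4 :> C) //; ring.
Qed.

Lemma cdot_vec6 (x0 x1 x2 x3 x4 x5 y0 y1 y2 y3 y4 y5 : C) :
  cdot (vec6 x0 x1 x2 x3 x4 x5) (vec6 y0 y1 y2 y3 y4 y5) =
  x0 * y0^* + x1 * y1^* + x2 * y2^* + x3 * y3^* + x4 * y4^* + x5 * y5^*.
Proof. by rewrite /cdot /vec6 !big_ord_recr big_ord0 !mxE /= add0r. Qed.

Lemma conj_sum_eq0 x y : (x + y)^* = 0 <-> x = - y.
Proof.
split=> [/eqP|->]; last by rewrite addNr rmorph0.
by rewrite conjC_eq0 addr_eq0 => /eqP.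
Qed.

Lemma orthogonality_iff (a b c d e f s1 s2 s3 s4 : C) :
  [/\ cdot (vec6 1 1 1 1 1 1) (vec6 1 a b e s1 s2) = 0,
      cdot (vec6 1 1 1 1 1 1) (vec6 1 c d f s3 s4) = 0 &
      cdot (vec6 1 a b e s1 s2) (vec6 1 c d f s3 s4) = 0] <->
  [/\ s1 + s2 = - (1 + a + b + e), s3 + s4 = - (1 + c + d + f) &
      s1^* * s3 + s2^* * s4 = - (1 + c * a^* + d * b^* + f * e^*)].
Proof.
have E1 : cdot (vec6 1 1 1 1 1 1) (vec6 1 a b e s1 s2) = (s1 + s2 + (1 + a + b + e))^*.
  by rewrite cdot_vec6 !rmorphD /= !rmorph1; ring.
have E2 : cdot (vec6 1 1 1 1 1 1) (vec6 1 c d f s3 s4) = (s3 + s4 + (1 + c + d + f))^*.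
  by rewrite cdot_vec6 !rmorphD /= !rmorph1; ring.
have E3 : cdot (vec6 1 a b e s1 s2) (vec6 1 c d f s3 s4) =
    (s1^* * s3 + s2^* * s4 + (1 + c * a^* + d * b^* + f * e^*))^*.
  by rewrite cdot_vec6 !rmorphD !rmorphM /= !conjCK !rmorph1; ring.
rewrite E1 E2 E3; split=> [[]|[]] /conj_sum_eq0 h1 /conj_sum_eq0 h2 /conj_sum_eq0 h3.
  by split.
by split.
Qed.

Lemma orthogonal_completion_iff (a b c d e f : C) :
  (exists s1 s2 s3 s4 : C,
     [/\ `|s1| = 1, `|s2| = 1, `|s3| = 1 & `|s4| = 1] /\
     [/\ cdot (vec6 1 1 1 1 1 1) (vec6 1 a b e s1 s2) = 0,
         cdot (vec6 1 1 1 1 1 1) (vec6 1 c d f s3 s4) = 0 &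
         cdot (vec6 1 a b e s1 s2) (vec6 1 c d f s3 s4) = 0])
  <-> unit_split (- (1 + a + b + e)) (- (1 + c + d + f))
                 (- (1 + c * a^* + d * b^* + f * e^*)).
Proof.
split=> -[s1 [s2 [s3 [s4 [[h1 h2 h3 h4] O]]]]]; exists s1, s2, s3, s4.
  by split; [split; exact/normC1 | exact/orthogonality_iff].
by split; [split; exact/normC1 | exact/orthogonality_iff].
Qed.

Lemma balancedN p q r :
  balanced (-p) (-q) (-r) <-> p * q^* * r = 4 - `|p| ^+ 2 - `|q| ^+ 2 - `|r| ^+ 2.
Proof.
rewrite /balanced !normCK !rmorphN !mulrNN mulrN.
by split=> H; [rewrite -[LHS]opprK H | rewrite H]; ring.
Qed.

End UnitSplitting.

Theorem theorem2p15 (C : numClosedFieldType) (a b c d e f : C)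
  (ha : `|a| = 1) (hb : `|b| = 1) (hc : `|c| = 1)
  (hd : `|d| = 1) (he : `|e| = 1) (hf : `|f| = 1) :
  (exists s1 s2 s3 s4 : C,
     [/\ `|s1| = 1, `|s2| = 1, `|s3| = 1 & `|s4| = 1] /\
     [/\ cdot (vec6 1 1 1 1 1 1) (vec6 1 a b e s1 s2) = 0,
         cdot (vec6 1 1 1 1 1 1) (vec6 1 c d f s3 s4) = 0 &
         cdot (vec6 1 a b e s1 s2) (vec6 1 c d f s3 s4) = 0])
  <->
  (calH a b c d e f =
     4 - `|1 + a + b + e| ^+ 2 - `|1 + c + d + f| ^+ 2
       - `|1 + c * a^* + d * b^* + f * e^*| ^+ 2
   /\ `|1 + a + b + e| <= 2).
Proof.
apply: (iff_trans (orthogonal_completion_iff a b c d e f)).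
have -> : calH a b c d e f =
    (1 + a + b + e) * (1 + c + d + f)^* * (1 + c * a^* + d * b^* + f * e^*).
  by rewrite /calH !rmorphD rmorph1.
have -> : (`|1 + a + b + e| <= 2) =
    ((- (1 + a + b + e)) * (- (1 + a + b + e))^* <= 4).
  by rewrite sqr_norm_le2 normrN.
set p := 1 + a + b + e; set q := 1 + c + d + f.
set r := 1 + c * a^* + d * b^* + f * e^*.
split.
  by move=> S; split; [exact/balancedN/unit_split_balanced | exact: unit_split_bound S].
move=> [/balancedN hB hP]; apply: (balanced_split hB hP) => P4.
rewrite rmorphN mulrNN; apply: (degenerate_bound a b c d e f); try exact/normC1.
  by move: P4; rewrite rmorphN mulrNN.
by rewrite -[LHS]opprK (balanced_degenerate hB P4) rmorphN mulrNN.
Qed.
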